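(* Let $n\in\mathbb{N}_{\geqslant 2}$, $k \in \{1,2,\dots ,2^n-1\}$ and $s \in \{0,1,\dots ,n-2\}$. Write $k=\sum_{i}k_i2^i$ in binary, and for $t\in\mathbb{N}_0$ define $a^k_{t},b^k_{t}\in\mathbb{N}_0$ by $k=a^k_{t}2^t+b^k_{t}$ with $0\leqslant b^k_t<2^t$. Suppose $|\psi\rangle$ is an $n$-qubit state of the form $$|\psi\rangle=\left(\sum_{l=a^k_s}^{2^{n-s}-1} c_l|l\rangle\right) \otimes |k_{s-1}k_{s-2}\dots k_{0}\rangle,$$ with $c_l\in \mathbb{C}$ (for $s=0$ the second tensor factor is absent), and assume that $c_{2a^k_{s+1}+1}=0$ if $k_s=0$ and $b^k_{s+1}\neq 0$. Then there exists a uniformly controlled gate $A$ of the form $$A=\sum_{l=0}^{2^{n-1-s}-1} |l\rangle\langle l| \otimes U_l \otimes I^{ \otimes s},$$ with single-qubit unitaries $U_l$, such that $$A|\psi\rangle=\left(\sum_{l=a^k_{s+1}}^{2^{n-(s+1)}-1} c'_l|l\rangle\right) \otimes |k_{s}k_{s-1}\dots k_{0}\rangle$$ for some $c'_l\in \mathbb{C}$, and additionally $A|i\rangle=|i\rangle$ for all $i\in\{0,1,\ldots,k-1\}$.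
   Context: Computational basis states are labelled by integers, $|b_{n-1}\dots b_0\rangle=|\sum_i b_i2^i\rangle$, with the most significant qubit first; the number of qubits of $|l\rangle$ is clear from context. The gate $A$ acts as a single-qubit unitary on the $(n-s)$th qubit (counting from the most significant), conditioned uniformly on the $n-1-s$ more significant qubits, and trivially on the $s$ least significant qubits. *)

From HB Require Import structures.
From mathcomp Require Import all_boot all_order all_algebra all_field.
From mathcomp Require Import spectral.
Set Implicit Arguments. Unset Strict Implicit. Unset Printing Implicit Defensive.
Import Order.TTheory GRing.Theory Num.Theory.
Local Open Scope ring_scope.

Definition acoef (k t : nat) : nat := (k %/ 2 ^ t)%N.
Definition bcoef (k t : nat) : nat := (k %% 2 ^ t)%N.
Definition kbit (k t : nat) : nat := ((k %/ 2 ^ t) %% 2)%N.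

(* The uniformly controlled gate  A = sum_l |l><l| (x) U_l (x) I^{(x) s}
   on n qubits. Index i = l*2^(s+1) + u*2^s + r (most significant first). *)
Definition ucgate (n s : nat) (U : nat -> 'M[algC]_2) : 'M[algC]_(2 ^ n) :=
  \matrix_(i, j)
    if ((i %/ 2 ^ s.+1 == j %/ 2 ^ s.+1) && (i %% 2 ^ s == j %% 2 ^ s))%N
    then U (i %/ 2 ^ s.+1)%N (inord ((i %/ 2 ^ s) %% 2)) (inord ((j %/ 2 ^ s) %% 2))
    else 0.

Definition ket (n : nat) (i : 'I_(2 ^ n)) : 'cV[algC]_(2 ^ n) := delta_mx i 0.

(* entries of (sum_{l >= a} c_l |l>) (x) |b>  where the second factor has m qubits *)
Definition prodform (a b m : nat) (c : nat -> algC) (i : nat) : algC :=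
  (if (a <= i %/ 2 ^ m)%N then c (i %/ 2 ^ m)%N else 0) *
  (if (i %% 2 ^ m == b)%N then 1 else 0).

From mathcomp Require Import all_boot all_order all_algebra all_field.
From mathcomp Require Import spectral ring zify.
Import GRing.Theory Num.Theory.
Local Open Scope ring_scope.

(* Write a basis index as |l>|w>|r>, with w the qubit the gate acts on and r
   the s least significant qubits.  The gate only mixes the two amplitudes
   sharing (l, r); in psi the pair is zero unless r = b^k_s, and then it is
   (c_{2l}, c_{2l+1}) with the coefficients of index < a^k_s replaced by 0.
   Take U_l unitary with row 1 - k_s orthogonal to that pair: the amplitudes
   with w <> k_s vanish, which is the claimed form.  Choose U_l = I when the
   entry to clear is already 0.  This is the case for every block
   l <= a^k_{s+1} containing an index i < k: below a^k_{s+1} the whole pair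
   is 0, and for l = a^k_{s+1} the entry is either truncated (k_s = 1) or is
   c_{2l+1}, which vanishes by hypothesis since i < k forces b^k_{s+1} <> 0. *)

Section QubitDigits.
Local Open Scope nat_scope.
Variable s : nat.

Lemma acoefS k : acoef k s = acoef k s.+1 * 2 + kbit k s.
Proof. by rewrite /acoef /kbit expnSr divnMA -divn_eq. Qed.

Lemma bcoefS k : bcoef k s.+1 = kbit k s * 2 ^ s + bcoef k s.
Proof.
rewrite /bcoef /kbit modn_divl -expnS {1}(divn_eq (k %% 2 ^ s.+1) (2 ^ s)).
by rewrite (modn_dvdm _ (dvdn_exp2l 2 (leqnSn s))).
Qed.

Definition qidx (l w r : nat) : nat := l * 2 ^ s.+1 + w * 2 ^ s + r.

Lemma qidx_digits l {w r} : w < 2 -> r < 2 ^ s ->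
  [/\ acoef (qidx l w r) s = l * 2 + w, bcoef (qidx l w r) s = r,
      kbit (qidx l w r) s = w & acoef (qidx l w r) s.+1 = l].
Proof.
move=> w2 rs; have s0 : 0 < 2 ^ s by rewrite expn_gt0.
have -> : qidx l w r = (l * 2 + w) * 2 ^ s + r by rewrite /qidx expnSr; ring.
have aE : acoef ((l * 2 + w) * 2 ^ s + r) s = l * 2 + w.
  by rewrite /acoef divnMDl // divn_small ?addn0.
have kE : kbit ((l * 2 + w) * 2 ^ s + r) s = w.
  by rewrite /kbit -/(acoef _ s) aE modnMDl modn_small.
split=> //; first by rewrite /bcoef modnMDl modn_small.
have := acoefS ((l * 2 + w) * 2 ^ s + r); rewrite aE kE => /eqP.
by rewrite eqn_add2r eqn_pmul2r // => /eqP.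
Qed.

Lemma kbit_lt2 k : kbit k s < 2.
Proof. exact: ltn_pmod. Qed.

Lemma bcoef_lt k : bcoef k s < 2 ^ s.
Proof. by rewrite ltn_pmod ?expn_gt0. Qed.

Lemma qidxK i : qidx (acoef i s.+1) (kbit i s) (bcoef i s) = i.
Proof. by rewrite /qidx -addnA -bcoefS /acoef /bcoef -divn_eq. Qed.

Lemma eq_qidx l w r l' w' r' : w < 2 -> r < 2 ^ s -> w' < 2 -> r' < 2 ^ s ->
  (qidx l w r == qidx l' w' r') = [&& l == l', w == w' & r == r'].
Proof.
move=> w2 rs w2' rs'; apply/eqP/and3P => [e|[/eqP-> /eqP-> /eqP->]] //.
have [_ rE wE lE] := qidx_digits l w2 rs.
have [_ rE' wE' lE'] := qidx_digits l' w2' rs'.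
rewrite e rE' in rE; rewrite e wE' in wE; rewrite e lE' in lE.
by rewrite lE wE rE !eqxx.
Qed.

Lemma eq_digits i j : (i == j) =
  [&& acoef i s.+1 == acoef j s.+1, kbit i s == kbit j s & bcoef i s == bcoef j s].
Proof. by rewrite -{1}(qidxK i) -{1}(qidxK j) eq_qidx ?kbit_lt2 ?bcoef_lt. Qed.

Lemma eq_bcoefS i j :
  (bcoef i s.+1 == bcoef j s.+1) = (kbit i s == kbit j s) && (bcoef i s == bcoef j s).
Proof.
have := eq_qidx 0 _ _ 0 _ _ (kbit_lt2 i) (bcoef_lt i) (kbit_lt2 j) (bcoef_lt j).
by rewrite /qidx !mul0n !add0n -!bcoefS.
Qed.

Lemma qidx_lt {n i w r} : s < n -> i < 2 ^ n -> w < 2 -> r < 2 ^ s ->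
  qidx (acoef i s.+1) w r < 2 ^ n.
Proof.
move=> sn i_lt w2 rs.
have nE : 2 ^ n = 2 ^ (n - s.+1) * 2 ^ s.+1 by rewrite -expnD subnK.
have : acoef i s.+1 < 2 ^ (n - s.+1) by rewrite ltn_divLR ?expn_gt0 // -nE.
rewrite nE /qidx expnSr; nia.
Qed.

End QubitDigits.

Definition su2 (p q : algC) : 'M[algC]_2 :=
  \matrix_(i, j) if i == 0 then (if j == 0 then p else q)
                 else (if j == 0 then - q^* else p^*).

Lemma su2_unitary p q : p * p^* + q * q^* = 1 -> su2 p q \is unitarymx.
Proof.
move=> pq1; apply/unitarymxP/matrixP => i j.
rewrite !mxE !big_ord_recr big_ord0 /= !mxE.
case: i => [[|[|//]] ?]; case: j => [[|[|//]] ?] /=.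
all: rewrite add0r ?rmorphN /= ?conjCK ?mulr1n ?mulr0n -?pq1; ring.
Qed.

Lemma ord2_cases (u : 'I_2) : u = 0 \/ u = 1.
Proof. by case: u => [[|[|//]] ?]; [left | right]; apply: val_inj. Qed.

Lemma mulmx_col2E (M : 'M[algC]_2) (w : 'cV[algC]_2) i :
  (M *m w) i 0 = M i 0 * w 0 0 + M i 1 * w 1 0.
Proof.
rewrite mxE !big_ord_recr big_ord0 /= add0r.
by congr (M _ _ * w _ _ + M _ _ * w _ _); apply: val_inj.
Qed.

Lemma su2_10 : su2 1 0 = 1.
Proof.
apply/matrixP => i j; rewrite !mxE.
by case: (ord2_cases i) => ->; case: (ord2_cases j) => ->;
  rewrite /= ?rmorph0 ?rmorph1 ?oppr0.
Qed.

Section Annihilator.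
Variables (u : 'I_2) (v : 'cV[algC]_2).
Let x := v 0 0.
Let y := v 1 0.
Let N := sqrtC (x * x^* + y * y^*).

Lemma annihilator_normE : v u 0 != 0 ->
  [/\ N != 0, N^* = N & N * N = x * x^* + y * y^*].
Proof.
move=> vu0; have xy0 : (x != 0) || (y != 0).
  by case: (ord2_cases u) vu0 => -> ->; rewrite ?orbT.
have sq_ge0 : 0 <= x * x^* + y * y^* by rewrite -!normCK addr_ge0 ?exprn_ge0.
rewrite /N; split; last by rewrite -expr2 sqrtCK.
- rewrite sqrtC_eq0 -!normCK paddr_eq0 ?exprn_ge0 // !expf_eq0 /= !normr_eq0.
  by rewrite negb_and.
- by rewrite geC0_conj // sqrtC_ge0.
Qed.

(* In both nontrivial cases row u is (-y, x) / N, orthogonal to v. *)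
Definition annihilator : 'M[algC]_2 :=
  if v u 0 == 0 then su2 1 0
  else if u == 0 then su2 (- y / N) (x / N) else su2 (x^* / N) (y^* / N).

Lemma annihilator_id : v u 0 = 0 -> annihilator = 1.
Proof. by rewrite /annihilator => ->; rewrite eqxx su2_10. Qed.

Lemma annihilator_unitary : annihilator \is unitarymx.
Proof.
rewrite /annihilator; case: eqP => [_|/eqP vu0].
  by apply: su2_unitary; rewrite rmorph0 rmorph1 mulr0 mulr1 addr0.
have [N0 NC NN] := annihilator_normE vu0.
case: eqP => _; apply: su2_unitary; rewrite !rmorphM !fmorphV ?rmorphN /= ?conjCK !NC.
all: rewrite -(divff (mulf_neq0 N0 N0)) {1}NN.
all: by field.
Qed.

Lemma annihilator_kills : (annihilator *m v) u 0 = 0.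
Proof.
rewrite /annihilator; case: eqP => [vu0|/eqP vu0]; first by rewrite su2_10 mul1mx.
have [N0 NC _] := annihilator_normE vu0.
rewrite mulmx_col2E -/x -/y.
case: (ord2_cases u) => ->; rewrite !mxE /= ?rmorphM ?fmorphV /= ?conjCK ?NC.
all: by field.
Qed.

End Annihilator.

Section UniformlyControlledGate.
Variables (n s : nat) (U : nat -> 'M[algC]_2).

Lemma ucgate_mul_ket (i : 'I_(2 ^ n)) :
  U (acoef i s.+1) = 1 -> ucgate n s U *m ket i = ket i.
Proof.
move=> Ui1; rewrite /ket -colE; apply/matrixP => j z; rewrite ord1 !mxE eqxx andbT.
rewrite -val_eqE (eq_digits s j i) /acoef /kbit /bcoef.
case: eqP => [jiE|] //=; case: (j == i %[mod 2 ^ s]); rewrite ?andbF ?andbT //.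
by rewrite jiE Ui1 mxE -val_eqE /= !inordK ?ltn_pmod.
Qed.

Lemma ucgate_mulmxE (psi : 'cV[algC]_(2 ^ n)) (f : nat -> algC) :
  (s < n)%N -> (forall j : 'I_(2 ^ n), psi j 0 = f j) -> forall i : 'I_(2 ^ n),
  (ucgate n s U *m psi) i 0 =
  (U (acoef i s.+1) *m \col_(w < 2) f (qidx s (acoef i s.+1) w (bcoef i s)))
    (inord (kbit i s)) 0.
Proof.
move=> lt_s_n psiE i; set l := acoef i s.+1; set r := bcoef i s.
have r_lt := bcoef_lt s i.
pose J (w : 'I_2) : 'I_(2 ^ n) :=
  Ordinal (qidx_lt s lt_s_n (ltn_ord i) (ltn_ord w) r_lt).
have J_digits w : [/\ acoef (J w) s.+1 = l, kbit (J w) s = w & bcoef (J w) s = r].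
  by have [_ rE wE lE] := qidx_digits s l (ltn_ord w) r_lt.
have ucJ w : ucgate n s U i (J w) = U l (inord (kbit i s)) w.
  have [] := J_digits w; rewrite /acoef /kbit /bcoef mxE => -> -> ->.
  by rewrite !eqxx inord_val.
have J_onto j : ucgate n s U i j != 0 -> j = J (inord (kbit j s)).
  rewrite mxE; case: ifP => [/andP[/eqP lE /eqP rE] _|]; last by rewrite eqxx.
  apply: val_inj; rewrite /= inordK ?kbit_lt2 // -{1}(qidxK s j).
  by rewrite /l /r /acoef /bcoef lE rE.
have J10 : J 1 != J 0 by rewrite -val_eqE /= eq_qidx // !eqxx.
rewrite mxE (bigD1 (J 0)) // (bigD1 (J 1)) //= big1 ?addr0; last first.
  move=> j /andP[j0 j1]; have [->|/J_onto jE] := eqVneq (ucgate n s U i j) 0.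
    by rewrite mul0r.
  case: (ord2_cases (inord (kbit j s))) jE => -> jE.
  - by rewrite jE eqxx in j0.
  - by rewrite jE eqxx in j1.
by rewrite !ucJ !psiE mulmx_col2E !mxE.
Qed.

End UniformlyControlledGate.

Lemma prodform_qidx a b s c l (w r : nat) : (w < 2)%N -> (r < 2 ^ s)%N ->
  prodform a b s c (qidx s l w r) =
  (r == b)%:R * (if (a <= l * 2 + w)%N then c (l * 2 + w)%N else 0).
Proof.
move=> w2 r_lt; have [aE bE _ _] := qidx_digits s l w2 r_lt.
rewrite /prodform -/(acoef _ s) -/(bcoef _ s) aE bE mulrC.
by case: (r == b); rewrite ?mulr1n ?mulr0n.
Qed.

Section Reduction.
Variables (k s : nat) (c : nat -> algC).

Definition block_coefs (l : nat) : 'cV[algC]_2 :=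
  \col_(w < 2) if (acoef k s <= l * 2 + w)%N then c (l * 2 + w)%N else 0.

Definition reduction_target : 'I_2 := inord (1 - kbit k s).

Definition reducing_unitary (l : nat) : 'M[algC]_2 :=
  annihilator reduction_target (block_coefs l).

Lemma block_coefs_below l : (l < acoef k s.+1)%N -> block_coefs l = 0.
Proof.
move=> lt_l; apply/matrixP => w z; rewrite !mxE ifN // -ltnNge (acoefS s k).
by have := ltn_ord w; lia.
Qed.

Lemma inord_eq_target (u : nat) : (u < 2)%N ->
  (inord u == reduction_target) = (u != kbit k s).
Proof.
move=> u2; rewrite -val_eqE /= !inordK //; last by rewrite ltnS leq_subr.
by have := kbit_lt2 s k; case: (kbit k s) => [|[|//]]; case: u u2 => [|[|//]].
Qed.

Lemma ucgate_reducing_mulE n (psi : 'cV[algC]_(2 ^ n)) : (s < n)%N ->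
  (forall i : 'I_(2 ^ n), psi i 0 = prodform (acoef k s) (bcoef k s) s c i) ->
  forall i : 'I_(2 ^ n), (ucgate n s reducing_unitary *m psi) i 0 =
    prodform (acoef k s.+1) (bcoef k s.+1) s.+1
      (fun l => (reducing_unitary l *m block_coefs l) (inord (kbit k s)) 0) i.
Proof.
move=> lt_s_n psiE i.
rewrite (@ucgate_mulmxE n s reducing_unitary psi _ lt_s_n psiE).
set l := acoef i s.+1; set r := bcoef i s.
have -> : \col_(w < 2) prodform (acoef k s) (bcoef k s) s c (qidx s l w r) =
          (r == bcoef k s)%:R *: block_coefs l.
  by apply/matrixP => w z; rewrite !mxE prodform_qidx ?bcoef_lt.
rewrite -scalemxAr mxE /prodform -/(acoef i s.+1) -/(bcoef i s.+1).
rewrite eq_bcoefS -/l -/r.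
case: (r == bcoef k s); rewrite ?andbF ?andbT ?mul0r ?mulr0 // mul1r.
have [->|ki_neq] := eqVneq (kbit i s) (kbit k s); rewrite ?eqxx ?mulr1 ?mulr0.
  by case: leqP => // /block_coefs_below ->; rewrite mulmx0 mxE.
have /eqP-> : inord (kbit i s) == reduction_target.
  by rewrite inord_eq_target ?kbit_lt2.
exact: annihilator_kills.
Qed.

Lemma reducing_unitary_id (i : nat) : (i < k)%N ->
  (kbit k s = 0%N -> bcoef k s.+1 != 0%N -> c (2 * acoef k s.+1).+1 = 0) ->
  reducing_unitary (acoef i s.+1) = 1.
Proof.
move=> lt_ik hc; apply: annihilator_id.
have : (acoef i s.+1 <= acoef k s.+1)%N by rewrite leq_div2r // ltnW.
rewrite leq_eqVlt => /orP[/eqP aE|/block_coefs_below ->]; last by rewrite mxE.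
have bk_pos : (0 < bcoef k s.+1)%N.
  move: lt_ik; rewrite {1}(divn_eq i (2 ^ s.+1)%N) {1}(divn_eq k (2 ^ s.+1)%N).
  by rewrite -[(i %/ _)%N]/(acoef i s.+1) aE /acoef /bcoef; lia.
rewrite mxE aE (acoefS s k) /reduction_target.
have := kbit_lt2 s k; case kE: (kbit k s) => [|[|//]] _; rewrite inordK //=.
  by rewrite addn0 addn1 leqnSn mulnC hc // -lt0n.
by rewrite ifN // addn0 -ltnNge addn1.
Qed.

End Reduction.

Theorem lemma10 (n k s : nat) (psi : 'cV[algC]_(2 ^ n)) (c : nat -> algC) :
  (2 <= n)%N -> (0 < k < 2 ^ n)%N -> (s <= n - 2)%N ->
  (forall i : 'I_(2 ^ n), psi i 0 = prodform (acoef k s) (bcoef k s) s c i) ->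
  (kbit k s = 0%N -> bcoef k s.+1 != 0%N -> c (2 * acoef k s.+1).+1 = 0) ->
  exists U : nat -> 'M[algC]_2,
    (forall l : nat, (l < 2 ^ (n - 1 - s))%N -> U l \is unitarymx) /\
    (exists c' : nat -> algC, forall i : 'I_(2 ^ n),
        (ucgate n s U *m psi) i 0 =
        prodform (acoef k s.+1) (bcoef k s.+1) s.+1 c' i) /\
    (forall i : 'I_(2 ^ n), (i < k)%N -> ucgate n s U *m ket i = ket i).
Proof.
move=> le_2_n _ le_s_n2 psiE hc.
have lt_s_n : (s < n)%N by lia.
exists (reducing_unitary k s c); split; [|split].
- by move=> l _; apply: annihilator_unitary.
- by eexists; apply: ucgate_reducing_mulE lt_s_n psiE.
- by move=> i lt_ik; apply: ucgate_mul_ket; apply: reducing_unitary_id.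
Qed.
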